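(* Let $K\ge L\ge T\ge 2$ be integers, let $\kappa,\lambda$ be the smallest non-negative integers such that $K+1+\kappa$ and $L+1+\lambda$ are coprime to $T-1$, and put $K^\star=K+1+\kappa$, $L^\star=L+1+\lambda$, $\bar T=T-1$, $q=K^\star L^\star+\bar T^2$. Let $x$ be a positive integer coprime to $q$ and $y\in\{0,\dots,q-1\}$ the unique integer with $x\bar T+yK^\star\equiv 0\pmod q$. Then every integer solution $(i,j)$ of $ix\equiv jy\pmod q$ is of the form $i=-a\bar T+bL^\star$, $j=aK^\star+b\bar T$ for some integers $a,b$. *)

From mathcomp Require Import all_boot all_order all_algebra.
Set Implicit Arguments. Unset Strict Implicit. Unset Printing Implicit Defensive.

Definition least_coprime_shift (m n k : nat) : Prop :=
  coprime (m + 1 + k) n /\ (forall k', k' < k -> ~~ coprime (m + 1 + k') n).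

From mathcomp Require Import all_boot all_order all_algebra.
From mathcomp Require Import ring.
Set Implicit Arguments. Unset Strict Implicit. Unset Printing Implicit Defensive.
Import GRing.Theory Num.Theory.
Local Open Scope ring_scope.

(* Write A = K*, B = L*, t = T-bar, so that q = A B + t^2 is the determinant of
   M = [[A, t], [-t, B]].  The claimed lattice is the image of the adjugate of M,
   which is exactly the set of (i, j) with M (i, j) = 0 (mod q).  Multiplying
   A i + t j by the unit x and using x t + y A = 0 shows that i x = j y forces
   A i + t j = 0 (mod q); multiplying B j - t i by A, which is a unit modulo q
   because gcd(A, q) = gcd(A, t^2) = 1, gives the second row. *)

Section DetLattice.

Variables A B t : int.

Let q := A * B + t ^+ 2.

Lemma coprimez_det_l : coprimez A t -> coprimez q A.
Proof.
move=> coAt; rewrite coprimez_sym /coprimez /q mulrC gcdzMDl.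
exact: coprimezXr.
Qed.

Lemma dvdz_det_row (x y i j : int) :
    coprimez q x -> (q %| x * t + y * A)%Z -> (q %| i * x - j * y)%Z ->
  (q %| A * i + t * j)%Z.
Proof.
move=> coqx dxy dij; rewrite -(Gauss_dvdzl _ coqx).
have -> : (A * i + t * j) * x = A * (i * x - j * y) + j * (x * t + y * A) by ring.
by rewrite rpredD ?dvdz_mull.
Qed.

Lemma dvdz_adj_row (i j : int) :
  coprimez q A -> (q %| A * i + t * j)%Z -> (q %| B * j - t * i)%Z.
Proof.
move=> coqA dij; rewrite -(Gauss_dvdzl _ coqA).
have -> : (B * j - t * i) * A = j * q - t * (A * i + t * j) by rewrite /q; ring.
by rewrite rpredB ?dvdz_mull ?dvdzz.
Qed.

Lemma dvdz_adj_lattice (i j : int) :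
    q != 0 -> (q %| A * i + t * j)%Z -> (q %| B * j - t * i)%Z ->
  exists a b : int, i = - a * t + b * B /\ j = a * A + b * t.
Proof.
move=> q_neq0 /dvdzP[b hb] /dvdzP[a ha].
exists a, b; split; apply: (mulIf q_neq0).
  transitivity (- (a * q) * t + (b * q) * B); last by ring.
  by rewrite -ha -hb /q; ring.
transitivity ((a * q) * A + (b * q) * t); last by ring.
by rewrite -ha -hb /q; ring.
Qed.

Lemma congr_solutions_lattice (x y i j : int) :
    q != 0 -> coprimez A t -> coprimez q x -> (q %| x * t + y * A)%Z ->
    (i * x = j * y %[mod q])%Z ->
  exists a b : int, i = - a * t + b * B /\ j = a * A + b * t.
Proof.
move=> q_neq0 coAt coqx dxy /eqP; rewrite eqz_mod_dvd => dij.
have dAtq := dvdz_det_row coqx dxy dij.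
exact: dvdz_adj_lattice q_neq0 dAtq (dvdz_adj_row (coprimez_det_l coAt) dAtq).
Qed.

End DetLattice.

Theorem lemma5 (K L T kappa lambda x y : nat)
  (hLK : (L <= K)%N) (hTL : (T <= L)%N) (hT : (2 <= T)%N)
  (hkappa : least_coprime_shift K (T - 1) kappa)
  (hlambda : least_coprime_shift L (T - 1) lambda)
  (hx : (0 < x)%N)
  (hxq : coprime x ((K + 1 + kappa) * (L + 1 + lambda) + (T - 1) ^ 2))
  (hy : (y < (K + 1 + kappa) * (L + 1 + lambda) + (T - 1) ^ 2)%N)
  (hxy : (x * (T - 1) + y * (K + 1 + kappa)
            = 0 %[mod (K + 1 + kappa) * (L + 1 + lambda) + (T - 1) ^ 2])%N) :
  forall i j : int,
    (i * x%:Z = j * y%:Z %[mod ((K + 1 + kappa) * (L + 1 + lambda) + (T - 1) ^ 2)%N%:Z])%Z ->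
    exists a b : int,
      i = - a * (T - 1)%N%:Z + b * (L + 1 + lambda)%N%:Z /\
      j = a * (K + 1 + kappa)%N%:Z + b * (T - 1)%N%:Z.
Proof.
case: hkappa => coAt _; move: hxq hxy coAt.
set A := (K + 1 + kappa)%N; set B := (L + 1 + lambda)%N; set t := (T - 1)%N.
move=> coxq dxy coAt i j hij.
have q_gt0 : (0 < A * B + t ^ 2)%N by rewrite addn_gt0 muln_gt0 !addn_gt0 !orbT.
have dvd_q_xy : (A * B + t ^ 2 %| x * t + y * A)%N by rewrite /dvdn dxy mod0n.
move: hij; rewrite -[(A * B + t ^ 2)%N%:Z]/(A%:Z * B%:Z + t%:Z ^+ 2).
apply: congr_solutions_lattice.
- by apply: lt0r_neq0; rewrite ltz_nat.
- exact: coAt.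
- by rewrite coprimez_sym.
- exact: dvd_q_xy.
Qed.
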